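(* Let $M$ be a monoidal category which admits functorial inverses and let $f:x\to x'$ be a morphism in $M$. Then for all objects $y,z\in M$ the maps $$(-)\otimes f: M(y,z)\to M(y\otimes x, z\otimes x'),\qquad f\otimes(-): M(y,z)\to M(x\otimes y, x'\otimes z)$$ are bijections.
   Context: A monoidal category $M$ admits functorial inverses if there exist a functor $i:M\to M$ and a natural isomorphism $x\otimes i(x)\cong 1$. $M(a,b)$ denotes the set of morphisms from $a$ to $b$ in $M$. *)

From mathcomp Require Import ssreflect ssrfun.

Set Implicit Arguments.
Unset Strict Implicit.

Record Category := {
  Ob :> Type;
  Hom : Ob -> Ob -> Type;
  idm : forall a, Hom a a;
  comp : forall a b c, Hom b c -> Hom a b -> Hom a c;
  comp_id_l : forall a b (f : Hom a b), comp (idm b) f = f;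
  comp_id_r : forall a b (f : Hom a b), comp f (idm a) = f;
  comp_assoc : forall a b c d (f : Hom a b) (g : Hom b c) (h : Hom c d),
      comp h (comp g f) = comp (comp h g) f
}.
Arguments Hom {C} : rename.
Arguments idm {C} a : rename.
Arguments comp {C a b c} : rename.

Record MonoidalData (C : Category) := {
  tens : C -> C -> C;
  tensm : forall a a' b b', Hom a a' -> Hom b b' -> Hom (tens a b) (tens a' b');
  munit : C;
  assoc : forall a b c, Hom (tens (tens a b) c) (tens a (tens b c));
  assoc_inv : forall a b c, Hom (tens a (tens b c)) (tens (tens a b) c);
  lunit : forall a, Hom (tens munit a) a;
  lunit_inv : forall a, Hom a (tens munit a);
  runit : forall a, Hom (tens a munit) a;
  runit_inv : forall a, Hom a (tens a munit)
}.
Arguments tens {C} m.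
Arguments tensm {C} m {a a' b b'}.
Arguments munit {C} m.
Arguments assoc {C} m a b c.
Arguments assoc_inv {C} m a b c.
Arguments lunit {C} m a.
Arguments lunit_inv {C} m a.
Arguments runit {C} m a.
Arguments runit_inv {C} m a.

Record MonoidalLaws (C : Category) (D : MonoidalData C) : Prop := {
  tensm_id : forall a b, tensm D (idm a) (idm b) = idm (tens D a b);
  tensm_comp : forall a1 a2 a3 b1 b2 b3 (f : Hom a1 a2) (g : Hom a2 a3)
      (f' : Hom b1 b2) (g' : Hom b2 b3),
      tensm D (comp g f) (comp g' f') = comp (tensm D g g') (tensm D f f');
  assoc_iso1 : forall a b c, comp (assoc_inv D a b c) (assoc D a b c) = idm _;
  assoc_iso2 : forall a b c, comp (assoc D a b c) (assoc_inv D a b c) = idm _;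
  assoc_nat : forall a a' b b' c c' (f : Hom a a') (g : Hom b b') (h : Hom c c'),
      comp (assoc D a' b' c') (tensm D (tensm D f g) h)
      = comp (tensm D f (tensm D g h)) (assoc D a b c);
  lunit_iso1 : forall a, comp (lunit_inv D a) (lunit D a) = idm _;
  lunit_iso2 : forall a, comp (lunit D a) (lunit_inv D a) = idm _;
  lunit_nat : forall a a' (f : Hom a a'),
      comp (lunit D a') (tensm D (idm (munit D)) f) = comp f (lunit D a);
  runit_iso1 : forall a, comp (runit_inv D a) (runit D a) = idm _;
  runit_iso2 : forall a, comp (runit D a) (runit_inv D a) = idm _;
  runit_nat : forall a a' (f : Hom a a'),
      comp (runit D a') (tensm D f (idm (munit D))) = comp f (runit D a);
  pentagon : forall a b c d,
      comp (assoc D a b (tens D c d)) (assoc D (tens D a b) c d)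
      = comp (tensm D (idm a) (assoc D b c d))
          (comp (assoc D a (tens D b c) d) (tensm D (assoc D a b c) (idm d)));
  triangle : forall a b,
      comp (tensm D (idm a) (lunit D b)) (assoc D a (munit D) b)
      = tensm D (runit D a) (idm b)
}.

Record MonoidalCategory := {
  mcat :> Category;
  mdata : MonoidalData mcat;
  mlaws : MonoidalLaws mdata
}.

(** [M] admits functorial inverses: a functor [i : M -> M] and a natural
    isomorphism [eta_x : x ⊗ i(x) ≅ 1] (natural in x; target functor constant 1). *)
Definition admits_functorial_inverses (M : MonoidalCategory) : Prop :=
  let D := mdata M in
  exists (i : M -> M) (im : forall a b, Hom a b -> Hom (i a) (i b))
         (eta : forall a, Hom (tens D a (i a)) (munit D))
         (eta_inv : forall a, Hom (munit D) (tens D a (i a))),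
    (forall a, im a a (idm a) = idm (i a)) /\
    (forall a b c (f : Hom a b) (g : Hom b c),
        im a c (comp g f) = comp (im b c g) (im a b f)) /\
    (forall a, comp (eta_inv a) (eta a) = idm _) /\
    (forall a, comp (eta a) (eta_inv a) = idm _) /\
    (forall a b (f : Hom a b), comp (eta b) (tensm D f (im a b f)) = eta a).

(* Writing ρ for the isomorphisms [y ⊗ x ⊗ i x ≅ y ⊗ 1 ≅ y], the map
   [h ↦ ρ ∘ (h ⊗ i f) ∘ ρ⁻¹] is a left inverse of [g ↦ g ⊗ f], by naturality of
   [x ⊗ i x ≅ 1].  It is itself injective, being a conjugate of [h ↦ h ⊗ i f],
   which has a left inverse for the same reason; hence [g ↦ g ⊗ f] is bijective.
   Only the associator, the right unitor and [x ⊗ i x ≅ 1] enter, so the argument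
   also applies to the reversed tensor product, which settles [f ⊗ g] once we have
   inverses on the left: [i x ⊗ x ≅ 1] follows from the natural isomorphism
   [x ≅ x ⊗ (i x ⊗ i i x) ≅ (x ⊗ i x) ⊗ i i x ≅ i i x]. *)

From Pilot Require Import Defs.
From mathcomp Require Import ssreflect ssrfun.

Set Implicit Arguments.
Unset Strict Implicit.

Local Notation "g ⊚ f" := (Defs.comp g f) (at level 40, left associativity).

Section Isomorphisms.
Variable C : Category.

Definition inverse (a b : C) (u : Hom a b) (v : Hom b a) : Prop :=
  v ⊚ u = idm a /\ u ⊚ v = idm b.

Lemma compA_eq (a b c d : C) (h : Hom c d) (u : Hom b c) (v : Hom a b) (w : Hom a c) :
  u ⊚ v = w -> h ⊚ u ⊚ v = h ⊚ w.
Proof. by move=> <-; rewrite comp_assoc. Qed.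

Lemma inverse_id (a : C) : inverse (idm a) (idm a).
Proof. by split; rewrite comp_id_l. Qed.

Lemma inverse_sym (a b : C) (u : Hom a b) (v : Hom b a) : inverse u v -> inverse v u.
Proof. by case. Qed.

Lemma inverse_comp (a b c : C) (u : Hom a b) (u' : Hom b a) (v : Hom b c) (v' : Hom c b) :
  inverse u u' -> inverse v v' -> inverse (v ⊚ u) (u' ⊚ v').
Proof.
move=> [u'u uu'] [v'v vv']; split.
- by rewrite comp_assoc (compA_eq _ v'v) comp_id_r.
- by rewrite comp_assoc (compA_eq _ uu') comp_id_r.
Qed.

Lemma inverse_nat (a b c d : C) (u : Hom a b) (u' : Hom b a) (v : Hom c d) (v' : Hom d c)
    (h : Hom c a) (k : Hom d b) :
  inverse u u' -> inverse v v' -> u ⊚ h = k ⊚ v -> h ⊚ v' = u' ⊚ k.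
Proof.
move=> [u'u _] [_ vv'] uh_kv.
rewrite -[h]comp_id_l -u'u -[u' ⊚ u ⊚ h]comp_assoc uh_kv !comp_assoc.
by rewrite -[_ ⊚ v ⊚ v']comp_assoc vv' comp_id_r.
Qed.

Lemma conj_inj (a b c d : C) (u : Hom a b) (u' : Hom b a) (v : Hom c d) (v' : Hom d c) :
  inverse u u' -> inverse v v' -> injective (fun h : Hom b c => v ⊚ h ⊚ u).
Proof.
move=> [_ uu'] [v'v _] h1 h2 /(f_equal (fun k => v' ⊚ k ⊚ u')).
by rewrite /= !comp_assoc v'v !comp_id_l -!comp_assoc uu' !comp_id_r.
Qed.

End Isomorphisms.

(* The part of [MonoidalLaws] that cancellation uses; unlike [MonoidalLaws] it
   does not mention the left unitor, so it transfers to [rev_data] below. *)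
Record WeakMonoidalLaws (C : Category) (D : MonoidalData C) : Prop := {
  wtensm_id : forall a b, tensm D (idm a) (idm b) = idm (tens D a b);
  wtensm_comp : forall a1 a2 a3 b1 b2 b3 (f : Hom a1 a2) (g : Hom a2 a3)
      (f' : Hom b1 b2) (g' : Hom b2 b3),
      tensm D (g ⊚ f) (g' ⊚ f') = tensm D g g' ⊚ tensm D f f';
  wassoc_inverse : forall a b c, inverse (assoc D a b c) (assoc_inv D a b c);
  wassoc_nat : forall a a' b b' c c' (f : Hom a a') (g : Hom b b') (h : Hom c c'),
      assoc D a' b' c' ⊚ tensm D (tensm D f g) h
      = tensm D f (tensm D g h) ⊚ assoc D a b c;
  wrunit_inverse : forall a, inverse (runit D a) (runit_inv D a);
  wrunit_nat : forall a a' (f : Hom a a'),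
      runit D a' ⊚ tensm D f (idm (munit D)) = f ⊚ runit D a
}.

Lemma MonoidalLaws_weak (C : Category) (D : MonoidalData C) :
  MonoidalLaws D -> WeakMonoidalLaws D.
Proof.
by case=> tI tM aI1 aI2 aN _ _ _ rI1 rI2 rN _ _; split=> //; split.
Qed.

Section TensorIsomorphisms.
Variables (C : Category) (D : MonoidalData C) (W : WeakMonoidalLaws D).
Local Notation "f ⊗ g" := (tensm D f g) (at level 35).

Lemma tensm_inverse (a a' b b' : C) (u : Hom a a') (u' : Hom a' a)
    (v : Hom b b') (v' : Hom b' b) :
  inverse u u' -> inverse v v' -> inverse (u ⊗ v) (u' ⊗ v').
Proof.
move=> [u'u uu'] [v'v vv'].
by split; rewrite -(wtensm_comp W) ?u'u ?v'v ?uu' ?vv' (wtensm_id W).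
Qed.

Lemma assoc_inv_nat (a a' b b' c c' : C) (f : Hom a a') (g : Hom b b') (h : Hom c c') :
  assoc_inv D a' b' c' ⊚ (f ⊗ (g ⊗ h)) = ((f ⊗ g) ⊗ h) ⊚ assoc_inv D a b c.
Proof.
apply/esym/inverse_nat; [exact: (wassoc_inverse W) .. | exact: (wassoc_nat W)].
Qed.

Lemma runit_inv_nat (a a' : C) (f : Hom a a') :
  runit_inv D a' ⊚ f = (f ⊗ idm (munit D)) ⊚ runit_inv D a.
Proof.
apply/esym/inverse_nat; [exact: (wrunit_inverse W) .. | exact: (wrunit_nat W)].
Qed.

End TensorIsomorphisms.

Section RightCancellation.
Variables (C : Category) (D : MonoidalData C) (W : WeakMonoidalLaws D).
Local Notation "f ⊗ g" := (tensm D f g) (at level 35).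
Local Notation "a ⊙ b" := (tens D a b) (at level 35).
Variables (i : C -> C) (im : forall a b, Hom a b -> Hom (i a) (i b)).
Variables (eta : forall a, Hom (a ⊙ i a) (munit D))
  (etai : forall a, Hom (munit D) (a ⊙ i a)).
Hypothesis eta_inverse : forall a, inverse (eta a) (etai a).
Hypothesis eta_nat : forall (a b : C) (f : Hom a b), eta b ⊚ (f ⊗ im f) = eta a.

Definition contract (a w : C) : Hom ((a ⊙ w) ⊙ i w) a :=
  runit D a ⊚ (idm a ⊗ eta w) ⊚ assoc D a w (i w).

Definition expand (a w : C) : Hom a ((a ⊙ w) ⊙ i w) :=
  assoc_inv D a w (i w) ⊚ ((idm a ⊗ etai w) ⊚ runit_inv D a).

Lemma expand_inverse (a w : C) : inverse (expand a w) (contract a w).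
Proof.
apply: inverse_comp; last exact/inverse_sym/(wassoc_inverse W).
apply: inverse_comp; first exact/inverse_sym/(wrunit_inverse W).
exact/(tensm_inverse W)/inverse_sym/eta_inverse/inverse_id.
Qed.

Definition untensm_r (x x' : C) (f : Hom x x') (y z : C)
    (h : Hom (y ⊙ x) (z ⊙ x')) : Hom y z :=
  contract z x' ⊚ (h ⊗ im f) ⊚ expand y x.

Lemma tensm_rK (x x' : C) (f : Hom x x') (y z : C) :
  cancel (fun g : Hom y z => g ⊗ f) (@untensm_r x x' f y z).
Proof.
move=> g; rewrite /untensm_r /contract /expand !comp_assoc.
rewrite (compA_eq _ (wassoc_nat W _ _ _)) !comp_assoc.
rewrite (compA_eq _ (proj2 (wassoc_inverse W _ _ _))) comp_id_r.
rewrite !(compA_eq _ (esym (wtensm_comp W _ _ _ _))) comp_id_l comp_id_r.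
rewrite [eta x' ⊚ _]comp_assoc eta_nat (proj2 (eta_inverse x)).
by rewrite (wrunit_nat W) -comp_assoc (proj2 (wrunit_inverse W _)) comp_id_r.
Qed.

Lemma untensm_r_inj (x x' : C) (f : Hom x x') (y z : C) : injective (@untensm_r x x' f y z).
Proof.
apply: (inj_comp (f := fun k => contract z x' ⊚ k ⊚ expand y x)).
  exact: conj_inj (expand_inverse _ _) (inverse_sym (expand_inverse _ _)).
apply: can_inj; exact: tensm_rK.
Qed.

Lemma tensm_r_bij (x x' : C) (f : Hom x x') (y z : C) :
  bijective (fun g : Hom y z => g ⊗ f).
Proof.
exists (@untensm_r x x' f y z); first exact: tensm_rK.
apply: inj_can_sym; [exact: tensm_rK | exact: untensm_r_inj].
Qed.

End RightCancellation.

Definition rev_data (C : Category) (D : MonoidalData C) : MonoidalData C := {|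
  tens a b := tens D b a;
  tensm a a' b b' f g := tensm D g f;
  munit := munit D;
  assoc a b c := assoc_inv D c b a;
  assoc_inv a b c := assoc D c b a;
  lunit := runit D;
  lunit_inv := runit_inv D;
  runit := lunit D;
  runit_inv := lunit_inv D |}.

Lemma rev_weak_laws (C : Category) (D : MonoidalData C) :
  MonoidalLaws D -> WeakMonoidalLaws (rev_data D).
Proof.
move=> L; have W := MonoidalLaws_weak L; split=> /=.
- by move=> a b; rewrite (tensm_id L).
- by move=> *; rewrite (tensm_comp L).
- by move=> a b c; apply/inverse_sym/(wassoc_inverse W).
- by move=> a a' b b' c c' f g h; rewrite assoc_inv_nat.
- by move=> a; split; [exact: (lunit_iso1 L) | exact: (lunit_iso2 L)].
- by move=> a a' f; rewrite (lunit_nat L).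
Qed.

Section LeftInverses.
Variables (C : Category) (D : MonoidalData C) (L : MonoidalLaws D).
Local Notation "f ⊗ g" := (tensm D f g) (at level 35).
Local Notation "a ⊙ b" := (tens D a b) (at level 35).
Local Notation W := (MonoidalLaws_weak L).
Variables (i : C -> C) (im : forall a b, Hom a b -> Hom (i a) (i b)).
Variables (eta : forall a, Hom (a ⊙ i a) (munit D))
  (etai : forall a, Hom (munit D) (a ⊙ i a)).
Hypothesis eta_inverse : forall a, inverse (eta a) (etai a).
Hypothesis eta_nat : forall (a b : C) (f : Hom a b), eta b ⊚ (f ⊗ im f) = eta a.

Lemma etai_nat (a b : C) (f : Hom a b) : (f ⊗ im f) ⊚ etai a = etai b.
Proof.
rewrite -[etai b]comp_id_r.
by apply: (inverse_nat (eta_inverse b) (eta_inverse a)); rewrite comp_id_l.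
Qed.

Definition to_ii (a : C) : Hom a (i (i a)) :=
  lunit D (i (i a)) ⊚ (eta a ⊗ idm _) ⊚ assoc_inv D a (i a) (i (i a))
  ⊚ (idm a ⊗ etai (i a)) ⊚ runit_inv D a.

Definition from_ii (a : C) : Hom (i (i a)) a :=
  runit D a ⊚ ((idm a ⊗ eta (i a)) ⊚ (assoc D a (i a) (i (i a))
  ⊚ ((etai a ⊗ idm _) ⊚ lunit_inv D (i (i a))))).

Lemma to_ii_inverse (a : C) : inverse (to_ii a) (from_ii a).
Proof.
apply: inverse_comp; first exact/inverse_sym/(wrunit_inverse W).
apply: inverse_comp; first exact/(tensm_inverse W)/inverse_sym/eta_inverse/inverse_id.
apply: inverse_comp; first exact/inverse_sym/(wassoc_inverse W).
apply: inverse_comp; first exact/(tensm_inverse W)/inverse_id/eta_inverse.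
by split; [exact: (lunit_iso1 L) | exact: (lunit_iso2 L)].
Qed.

Lemma to_ii_nat (a b : C) (f : Hom a b) : to_ii b ⊚ f = im (im f) ⊚ to_ii a.
Proof.
have slide_etai : (idm b ⊗ etai (i b)) ⊚ (f ⊗ idm _)
    = (f ⊗ (im f ⊗ im (im f))) ⊚ (idm a ⊗ etai (i a)).
  by rewrite -!(wtensm_comp W) !comp_id_l !comp_id_r etai_nat.
have slide_eta : (eta b ⊗ idm _) ⊚ ((f ⊗ im f) ⊗ im (im f))
    = (idm _ ⊗ im (im f)) ⊚ (eta a ⊗ idm _).
  by rewrite -!(wtensm_comp W) eta_nat !comp_id_l !comp_id_r.
rewrite /to_ii -comp_assoc (runit_inv_nat W) !comp_assoc (compA_eq _ slide_etai).
rewrite !comp_assoc (compA_eq _ (assoc_inv_nat W _ _ _)) !comp_assoc.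
by rewrite (compA_eq _ slide_eta) !comp_assoc (lunit_nat L).
Qed.

Definition eta_l (a : C) : Hom (i a ⊙ a) (munit D) :=
  eta (i a) ⊚ (idm (i a) ⊗ to_ii a).

Definition etai_l (a : C) : Hom (munit D) (i a ⊙ a) :=
  (idm (i a) ⊗ from_ii a) ⊚ etai (i a).

Lemma eta_l_inverse (a : C) : inverse (eta_l a) (etai_l a).
Proof.
apply: inverse_comp; last exact: eta_inverse.
exact/(tensm_inverse W)/to_ii_inverse/inverse_id.
Qed.

Lemma eta_l_nat (a b : C) (f : Hom a b) : eta_l b ⊚ (im f ⊗ f) = eta_l a.
Proof.
rewrite /eta_l -comp_assoc -(wtensm_comp W) comp_id_l to_ii_nat.
by rewrite -{1}[im f]comp_id_r (wtensm_comp W) comp_assoc eta_nat.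
Qed.

End LeftInverses.

Theorem lemma3p14 (M : MonoidalCategory) (HM : admits_functorial_inverses M)
    (x x' : M) (f : Hom x x') (y z : M) :
  bijective (fun g : Hom y z => tensm (mdata M) g f) /\
  bijective (fun g : Hom y z => tensm (mdata M) f g).
Proof.
case: HM => i [im [eta [etai [_ [_ [etaK [etaiK eta_nat]]]]]]].
have eta_inverse a : inverse (eta a) (etai a) by split.
have L := mlaws M.
split; first exact: (tensm_r_bij (MonoidalLaws_weak L) eta_inverse eta_nat f y z).
exact: (tensm_r_bij (rev_weak_laws L) (eta_l_inverse L eta_inverse)
  (eta_l_nat L eta_inverse eta_nat) f y z).
Qed.
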